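(* Let $h(\alpha_1,\ldots,\alpha_r)$ be a rational function. (1) There exists a set $K\subset\mathbb{Z}^r$ contained in a finite union of hyperplanes such that if $h$ is N-small then $\lim_{\xi\to\infty} h(\xi^s)$ is finite for all $s\in\mathbb{Z}^r\setminus K$. (2) If $K\subset \mathbb{Z}^r$ is contained in a finite union of hyperplanes and $\lim_{\xi\to\infty} h(\xi^s)$ is finite for all $s\in\mathbb{Z}^r\setminus K$, then $h$ is N-small.
   Context: For $f\in \mathbb{Z}[\alpha_1^{\pm 1},\ldots,\alpha_r^{\pm 1}]$ the Newton polytope $\mathcal N(f)\subset\mathbb{R}^r$ is the convex hull of the exponent vectors of the monomials of $f$ with nonzero coefficient. A rational function $h=f_1/f_2$ with $f_1,f_2$ Laurent polynomials is N-small if $\mathcal N(f_1)\subset\mathcal N(f_2)$ (independent of the presentation). For $s\in\mathbb{Z}^r$, $h(\xi^s)$ denotes the one-variable rational function obtained by substituting $\alpha_i=\xi^{s_i}$. *)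

From HB Require Import structures.
From mathcomp Require Import all_boot all_order all_algebra.
From mathcomp Require Import finmap.
From mathcomp Require Import reals.
Set Implicit Arguments. Unset Strict Implicit. Unset Printing Implicit Defensive.
Import Order.TTheory GRing.Theory Num.Theory.
Local Open Scope ring_scope.
Local Open Scope fset_scope.

(* A Laurent polynomial in Z[a_1^{+-1},...,a_r^{+-1}]: a finitely supported
   map from exponent vectors e in Z^r to integer coefficients (default 0).
   Its monomials with nonzero coefficient are exactly those in [finsupp f]. *)
Definition laurent (r : nat) := {fsfun 'rV[int]_r -> int with 0%R}.

Section Defs.
Variables (R : realType) (r : nat).

Definition rvR (e : 'rV[int]_r) : 'rV[R]_r := map_mx (fun z : int => z%:~R) e.

Definition newton (f : laurent r) : 'rV[R]_r -> Prop := fun x =>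
  exists w : 'rV[int]_r -> R,
    (forall e, 0 <= w e) /\
    \sum_(e <- finsupp f) w e = 1 /\
    x = \sum_(e <- finsupp f) w e *: rvR e.

(* h = f1 / f2 is N-small iff N(f1) is contained in N(f2). *)
Definition Nsmall (f1 f2 : laurent r) : Prop :=
  forall x, newton f1 x -> newton f2 x.

Definition leval (f : laurent r) (x : 'rV[R]_r) : R :=
  \sum_(e <- finsupp f) (f e)%:~R * \prod_(i < r) (x 0 i) ^ (e 0 i).

Definition xipow (s : 'rV[int]_r) (xi : R) : 'rV[R]_r :=
  \row_i (xi ^ (s 0 i)).

(* "lim_{xi -> oo} h(xi^s) is finite", for h = f1/f2: the one-variable
   rational function h(xi^s) is defined (its denominator f2(xi^s) does not
   vanish for large real xi) and has a finite limit as xi -> +oo. *)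
Definition lim_finite (f1 f2 : laurent r) (s : 'rV[int]_r) : Prop :=
  (exists M : R, forall xi : R, M < xi -> leval f2 (xipow s xi) != 0) /\
  exists L : R, forall eps : R, 0 < eps ->
    exists M : R, forall xi : R, M < xi ->
      `| leval f1 (xipow s xi) / leval f2 (xipow s xi) - L | < eps.

Definition in_finite_hyperplanes (K : 'rV[int]_r -> Prop) : Prop :=
  exists A : seq 'rV[R]_r,
    (forall a, a \in A -> a != 0) /\
    forall s, K s -> exists2 a, a \in A & \sum_(i < r) a 0 i * (rvR s) 0 i = 0.

End Defs.

(* For s in Z^r, dividing numerator and denominator of h(xi^s) by xi^M, where M
   is the maximum of <s, .> on the exponents of f2, makes each of them converge
   to the sum of the coefficients of the monomials e with <s, e> = M (all other
   monomials carry a negative power of xi).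
   (1) Off the hyperplanes orthogonal to differences of exponents of f2 this
   maximum is attained at a single exponent, so the denominator has a nonzero
   limit; N-smallness bounds <s, .> on the exponents of f1 by M as well, so the
   ratio has a finite limit.
   (2) If an exponent e of f1 lies outside N(f2), Gordan's alternative gives a
   real direction a with <a, e> > <a, y> for every exponent y of f2.  Rounding a
   multiple of a and moving along the moment curve t |-> t^r z + (1, t, ...,
   t^(r-1)) produces an integral s with the same property that also avoids K and
   the hyperplanes of f1.  Then the numerator has a nonzero limit while the
   denominator tends to 0, contradicting finiteness of the limit. *)

From HB Require Import structures.
From mathcomp Require Import all_boot all_order all_algebra.
From mathcomp Require Import finmap.
From mathcomp Require Import reals.
From mathcomp Require Import classical_sets topology normedtype.
From mathcomp Require Import ring lra zify.
Set Implicit Arguments. Unset Strict Implicit. Unset Printing Implicit Defensive.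
Import Order.TTheory GRing.Theory Num.Theory numFieldNormedType.Exports.
Local Open Scope classical_set_scope.
Local Open Scope ring_scope.

Section Dot.
Variables (R : comRingType) (n : nat).
Implicit Types (a b c : 'rV[R]_n).

Definition dot a b : R := \sum_i a 0 i * b 0 i.

Lemma dotC a b : dot a b = dot b a.
Proof. by apply: eq_bigr => i _; rewrite mulrC. Qed.

Lemma dotDr a b c : dot a (b + c) = dot a b + dot a c.
Proof. by rewrite /dot -big_split; apply: eq_bigr => i _; rewrite mxE mulrDr. Qed.

Lemma dotZr a k b : dot a (k *: b) = k * dot a b.
Proof. by rewrite /dot mulr_sumr; apply: eq_bigr => i _; rewrite mxE mulrCA. Qed.

Lemma dotBr a b c : dot a (b - c) = dot a b - dot a c.
Proof. by rewrite dotDr -scaleN1r dotZr mulN1r. Qed.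

Lemma dotZl k a b : dot (k *: a) b = k * dot a b.
Proof. by rewrite dotC dotZr dotC. Qed.

Lemma dotBl a b c : dot (a - b) c = dot a c - dot b c.
Proof. by rewrite dotC dotBr !(dotC c). Qed.

Lemma dot_sumr (I : Type) (s : seq I) a (G : I -> 'rV[R]_n) :
  dot a (\sum_(x <- s) G x) = \sum_(x <- s) dot a (G x).
Proof.
elim: s => [|x s IH]; last by rewrite !big_cons dotDr IH.
by rewrite !big_nil /dot big1 // => i _; rewrite mxE mulr0.
Qed.

End Dot.

Lemma dot_gt0 (R : realDomainType) n (a : 'rV[R]_n) : a != 0 -> 0 < dot a a.
Proof.
move=> a0; rewrite lt_def sumr_ge0 ?andbT => [|i _]; last by rewrite -expr2 sqr_ge0.
apply: contra a0 => /eqP /psumr_eq0P a2_0; apply/eqP/rowP => i.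
by apply/eqP; rewrite mxE -sqrf_eq0 expr2 a2_0 // => j _; rewrite -expr2 sqr_ge0.
Qed.

Lemma ler_sum_term (R : numDomainType) (I : eqType) (s : seq I) (G : I -> R) x :
  x \in s -> (forall y, 0 <= G y) -> G x <= \sum_(y <- s) G y.
Proof.
by move=> xs G0; rewrite (perm_big _ (perm_to_rem xs)) big_cons lerDl sumr_ge0.
Qed.

Section Gordan.
Variables (F : realFieldType) (n : nat) (T : eqType).
Implicit Types (s : seq T) (u : T -> 'rV[F]_n) (a : 'rV[F]_n).

Definition pos_dependent s u := exists lam : T -> F,
  [/\ forall x, 0 <= lam x, 0 < \sum_(x <- s) lam x & \sum_(x <- s) lam x *: u x = 0].

Definition neg_separable s u := exists a, forall x, x \in s -> dot a (u x) <= -1.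

Lemma big_cons_update (V : nmodType) s x0 v (lam : T -> F) (G : T -> F -> V) :
  x0 \notin s ->
  \sum_(x <- x0 :: s) G x (if x == x0 then v else lam x) =
  G x0 v + \sum_(x <- s) G x (lam x).
Proof.
move=> x0s; rewrite big_cons eqxx; congr (_ + _); apply: eq_big_seq => x xs.
by case: eqVneq xs x0s => [-> ->|].
Qed.

Lemma pos_dependent_cons s u x0 :
  x0 \notin s -> pos_dependent s u -> pos_dependent (x0 :: s) u.
Proof.
move=> x0s [lam [lam0 lam_gt0 lamu]].
exists (fun x => if x == x0 then 0 else lam x); split.
- by move=> x; case: eqP.
- by rewrite (big_cons_update _ _ (fun _ l => l)) // add0r.
- by rewrite (big_cons_update _ _ (fun x l => l *: u x)) // scale0r add0r.
Qed.

Lemma pos_dependent_cons0 s u x0 :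
  x0 \notin s -> u x0 = 0 -> pos_dependent (x0 :: s) u.
Proof.
move=> x0s ux0; exists (fun x => if x == x0 then 1 else 0); split.
- by move=> x; case: eqP.
- by rewrite (big_cons_update _ _ (fun _ l => l)) // big1 // addr0.
- rewrite (big_cons_update _ _ (fun x l => l *: u x)) // ux0 scaler0 add0r.
  by rewrite big1 // => x _; rewrite scale0r.
Qed.

Lemma neg_separable_scale s u a eps :
  0 < eps -> (forall x, x \in s -> dot a (u x) <= - eps) -> neg_separable s u.
Proof.
move=> eps0 Ha; exists (eps^-1 *: a) => x /Ha; rewrite dotZl.
by rewrite -(@ler_pM2l _ eps^-1) ?invr_gt0 // mulrN mulVf ?gt_eqF.
Qed.

Lemma neg_separable_cons s u x0 a :
  (forall x, x \in s -> dot a (u x) <= -1) -> dot a (u x0) < 0 ->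
  neg_separable (x0 :: s) u.
Proof.
move=> Ha c0.
apply: (@neg_separable_scale _ _ a (Num.min 1 (- dot a (u x0)))).
  by rewrite lt_min ltr01 oppr_gt0.
move=> x; rewrite in_cons lerNr ge_min => /predU1P [->|/Ha]; first by rewrite lexx orbT.
by rewrite lerNr => ->.
Qed.

Lemma neg_separable_tilt s u x0 a :
  (forall x, x \in s -> dot a (u x) <= -1) -> dot a (u x0) = 0 -> u x0 != 0 ->
  neg_separable (x0 :: s) u.
Proof.
move=> Ha ax0 ux0.
(* Tilting [a] by [- t *: u x0] makes [dot _ (u x0)] negative and, as [t * S <= 1/2],
   keeps the bound on [s] up to a factor [2]. *)
pose S := \sum_(y <- s) `|dot (u x0) (u y)|.
have S0 : 0 <= S by apply: sumr_ge0.
pose t := (2 * (1 + S))^-1.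
have t0 : 0 < t by rewrite invr_gt0; lra.
have tS : t * S <= 1 / 2 by rewrite /t mulrC ler_pdivrMr; lra.
have q0 : 0 < t * dot (u x0) (u x0) by rewrite mulr_gt0 ?dot_gt0.
pose eps := Num.min (1 / 2) (t * dot (u x0) (u x0)).
apply: (@neg_separable_scale _ _ (a - t *: u x0) eps).
  by rewrite lt_min q0 andbT; lra.
move=> x; rewrite in_cons dotBl dotZl => /predU1P [->|xs].
  by rewrite ax0 sub0r lerN2 ge_min lexx orbT.
have ax_le := Ha x xs.
have /andP [S_le _] : - S <= dot (u x0) (u x) <= S.
  by rewrite -ler_norml (ler_sum_term (G := fun y => `|dot (u x0) (u y)|) xs).
have tS_le : t * (- S) <= t * dot (u x0) (u x) by rewrite ler_pM2l.
have : dot a (u x) - t * dot (u x0) (u x) <= - (1 / 2) by lra.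
by move/le_trans; apply; rewrite lerN2 ge_min lexx.
Qed.

Lemma pos_dependent_lift s u x0 a :
  x0 \notin s -> (forall x, x \in s -> dot a (u x) <= -1) -> 0 <= dot a (u x0) ->
  pos_dependent s (fun x => dot a (u x0) *: u x - dot a (u x) *: u x0) ->
  pos_dependent (x0 :: s) u.
Proof.
set c := dot a (u x0) => x0s Ha c0 [mu [mu0 mu_gt0 muw]].
pose m := - \sum_(y <- s) mu y * dot a (u y).
have mu_le_m : \sum_(y <- s) mu y <= m.
  rewrite /m -sumrN big_seq [leRHS]big_seq; apply: ler_sum => y /Ha ay.
  by have := mu0 y; nra.
exists (fun x => if x == x0 then m else c * mu x); split.
- by move=> x; case: eqP => _; [apply: le_trans mu_le_m; apply: sumr_ge0|apply: mulr_ge0].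
- rewrite (big_cons_update _ (fun x => c * mu x) (fun _ l => l)) //.
  rewrite -mulr_sumr.
  apply: (lt_le_trans mu_gt0); apply: (le_trans mu_le_m).
  by rewrite lerDl; apply: mulr_ge0 => //; apply: sumr_ge0.
- rewrite (big_cons_update _ (fun x => c * mu x) (fun x l => l *: u x)) //.
  rewrite -[RHS]muw.
  under [RHS]eq_bigr do rewrite scalerBr !scalerA.
  rewrite sumrB -scaler_suml /m scaleNr addrC.
  by under eq_bigr do rewrite mulrC.
Qed.

Lemma gordan s u : uniq s -> pos_dependent s u \/ neg_separable s u.
Proof.
elim: s u => [|x0 s IH] u; first by right; exists 0.
move=> /= /andP [x0s us].
have [dep|[a Ha]] := IH u us; first by left; exact: pos_dependent_cons.
have [c_lt0|c_ge0] := ltrP (dot a (u x0)) 0.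
  by right; exact: neg_separable_cons Ha c_lt0.
(* [dot a (w x) = 0]: a certificate [b] for [w] gives one for [u] orthogonal to [u x0]. *)
pose w x := dot a (u x0) *: u x - dot a (u x) *: u x0.
have [dep|[b Hb]] := IH w us; first by left; exact: pos_dependent_lift Ha c_ge0 dep.
have [ux0|ux0] := eqVneq (u x0) 0; first by left; exact: pos_dependent_cons0.
right; apply: (@neg_separable_tilt _ _ _ (dot a (u x0) *: b - dot b (u x0) *: a)) => //.
  move=> x /Hb; rewrite /w dotBr !dotZr dotBl !dotZl.
  by rewrite [dot b (u x0) * _]mulrC.
by rewrite dotBl !dotZl mulrC subrr.
Qed.

End Gordan.

Lemma separation (F : realFieldType) n (T : eqType) (s : seq T)
    (p : T -> 'rV[F]_n) (x : 'rV[F]_n) : uniq s ->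
  (exists w : T -> F, [/\ forall y, 0 <= w y, \sum_(y <- s) w y = 1 &
      x = \sum_(y <- s) w y *: p y]) \/
  (exists a, forall y, y \in s -> dot a (p y) + 1 <= dot a x).
Proof.
move=> us; case: (gordan (fun y => p y - x) us) => [[lam [lam0 lam_gt0 lam_px]]|[a Ha]].
  left; set L := \sum_(y <- s) lam y.
  have L0 : L != 0 by rewrite gt_eqF.
  have Lx : L *: x = \sum_(y <- s) lam y *: p y.
    apply/eqP; rewrite eq_sym -subr_eq0 scaler_suml -sumrB -[X in _ == X]lam_px.
    by apply/eqP/eq_bigr => y _; rewrite scalerBr.
  exists (fun y => lam y / L); split.
  - by move=> y; apply: divr_ge0 => //; apply: ltW.
  - by rewrite -mulr_suml mulfV.
  - under eq_bigr do rewrite mulrC -scalerA.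
    by rewrite -scaler_sumr -Lx scalerA mulVf // scale1r.
by right; exists a => y /Ha; rewrite dotBr; lra.
Qed.

Lemma fset_argmax (K : choiceType) d (T : orderType d) (A : {fset K}) (F : K -> T) x0 :
  x0 \in A -> exists2 x, x \in A & forall y, y \in A -> (F y <= F x)%O.
Proof.
move=> x0A.
case: (@Order.TotalTheory.arg_maxP _ _ _ [` x0A]%fset xpredT (F \o val)) => // x _ Fx.
by exists (val x) => [|y yA]; [exact: valP | exact: (Fx [` yA]%fset)].
Qed.

Lemma big_pred1_inj_seq (V : nmodType) (T U : eqType) (S : seq T) (k : T -> U)
    (F : T -> V) e :
  uniq S -> e \in S -> {in S &, injective k} -> \sum_(y <- S | k y == k e) F y = F e.
Proof.
move=> uS eS k_inj; rewrite big_mkcond (bigD1_seq e) //= eqxx big1_seq ?addr0 //.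
move=> y /andP [ye yS]; case: eqP => // /(k_inj _ _ yS eS) y_eq_e.
by rewrite y_eq_e eqxx in ye.
Qed.

Lemma exists_nonroot (F : numFieldType) (p : {poly F}) (n : nat) :
  p != 0 -> exists2 t : nat, (n <= t)%N & ~~ root p t%:R.
Proof.
move=> p_neq0; pose ks := iota 0 (size p).
have [/hasP [k _ k_nonroot]|all_roots] := boolP (has (fun k => ~~ root p (n + k)%:R) ks).
  by exists (n + k)%N; rewrite ?leq_addr.
pose rs := [seq (n + k)%:R : F | k <- ks].
have rs_roots : all (root p) rs.
  by apply/allP => _ /mapP [k k_in ->]; move/hasPn: all_roots => /(_ k k_in); rewrite negbK.
have rs_uniq : uniq rs.
  by rewrite map_inj_uniq ?iota_uniq // => i j /eqP; rewrite eqr_nat eqn_add2l => /eqP.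
by have := max_poly_roots p_neq0 rs_roots rs_uniq; rewrite size_map size_iota ltnn.
Qed.

Section MomentCurve.
Variable r : nat.
Implicit Types (z d : 'rV[int]_r) (t : nat).

Definition curve_point z t : 'rV[int]_r := \row_i (t%:Z ^+ r * z 0 i + t%:Z ^+ i).

Lemma dot_curve_point z t d :
  dot (curve_point z t) d = t%:Z ^+ r * dot z d + \sum_(i < r) t%:Z ^+ i * d 0 i.
Proof.
by rewrite /dot mulr_sumr -big_split; apply: eq_bigr => i _; rewrite mxE mulrDl mulrA.
Qed.

Lemma dot_curve_point_gt0 z d t :
  0 < dot z d -> \sum_(i < r) `|d 0 i| < t%:Z -> 0 < dot (curve_point z t) d.
Proof.
set A := \sum_(i < r) `|d 0 i| => zd_gt0 A_lt_t.
have A_ge0 : 0 <= A by apply: sumr_ge0.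
have tr_gt0 : 0 < t%:Z ^+ r by apply: exprn_gt0; lia.
set S := \sum_(i < r) t%:Z ^+ i * d 0 i.
have tS_le : `|t%:Z * S| <= t%:Z ^+ r * A.
  rewrite mulr_sumr /A mulr_sumr; apply: (le_trans (ler_norm_sum _ _ _)).
  apply: ler_sum => i _; rewrite mulrA -exprS normrM ger0_norm ?exprn_ge0 //.
  by rewrite ler_wpM2r // ler_weXn2l //; lia.
suff : 0 < t%:Z * dot (curve_point z t) d by rewrite pmulr_rgt0 //; lia.
rewrite dot_curve_point mulrDr mulrCA -/S.
have : - (t%:Z ^+ r * A) <= t%:Z * S.
  by rewrite lerNl (le_trans _ tS_le) // -normrN ler_norm.
have : t%:Z ^+ r * A < t%:Z ^+ r * (t%:Z * dot z d) by rewrite ltr_pM2l //; nia.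
lra.
Qed.

End MomentCurve.

Section Pinfty.
Variable R : realType.
Implicit Types (g h : R -> R).

Lemma nbhs_pinftyP (P : R -> Prop) :
  (\forall x \near +oo, P x) <-> exists M, forall x, M < x -> P x.
Proof. by split=> [[M [_ PM]]|[M PM]]; exists M => //; rewrite num_real. Qed.

Lemma cvg_pinftyP g (L : R) : g x @[x --> +oo] --> L <->
  forall eps : R, 0 < eps -> exists M, forall x, M < x -> `|g x - L| < eps.
Proof.
rewrite cvgrPdist_lt; split=> [H eps /H /nbhs_pinftyP [M HM]|H eps /H [M HM]].
  by exists M => x /HM; rewrite distrC.
by apply/nbhs_pinftyP; exists M => x /HM; rewrite distrC.
Qed.

Lemma cvg_exprz_nonpos (k : int) : k <= 0 ->
  x ^ k @[x --> +oo] --> ((k == 0)%:R : R).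
Proof.
move=> k_le0; have [->|k_neq0] := eqVneq k 0.
  by under eq_cvg do rewrite expr0z; apply: cvg_cst.
have -> : k = - `|k|%N%:Z by rewrite abszE ler0_norm ?opprK.
under eq_cvg do rewrite -invr_expz.
apply/cvgrVy; first by apply/nbhs_pinftyP; exists 0 => x x0; rewrite invr_gt0 exprz_gt0.
under eq_cvg do rewrite /= invrK.
apply/cvgryPge => A; apply/nbhs_pinftyP; exists (Num.max 1 A) => x.
rewrite gt_max => /andP [x1 Ax]; apply: (le_trans (ltW Ax)).
by apply: ler_eXnr; [rewrite absz_gt0 | apply: ltW].
Qed.

Lemma cvg_ratio g1 g2 h (c1 c2 : R) : c2 != 0 ->
  g1 x / h x @[x --> +oo] --> c1 -> g2 x / h x @[x --> +oo] --> c2 ->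
  (exists M, forall x, M < x -> g2 x != 0) /\ g1 x / g2 x @[x --> +oo] --> c1 / c2.
Proof.
move=> c2_neq0 cv1 cv2.
have /nbhs_pinftyP [M g2h_neq0] : \forall x \near +oo, g2 x / h x != 0.
  exact: cvgr_neq0 _ cv2 c2_neq0.
split; first by exists M => x /g2h_neq0; apply: contra_neq => ->; rewrite mul0r.
apply: cvg_trans (cvgM cv1 (cvgV c2_neq0 cv2)); apply: near_eq_cvg.
apply/nbhs_pinftyP; exists M => x /g2h_neq0.
rewrite mulf_eq0 negb_or invr_eq0 => /andP [_ hx].
by rewrite /= invf_div mulrA divfK.
Qed.

Lemma cvg_ratio_div0 g1 g2 h (c1 L : R) : c1 != 0 ->
  g1 x / h x @[x --> +oo] --> c1 -> g2 x / h x @[x --> +oo] --> 0 ->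
  (exists M, forall x, M < x -> g2 x != 0) -> ~ g1 x / g2 x @[x --> +oo] --> L.
Proof.
move=> c1_neq0 cv1 cv2 [M g2_neq0] cvL.
have : g1 x / h x @[x --> +oo] --> L * 0.
  apply: cvg_trans (cvgM cvL cv2); apply: near_eq_cvg.
  by apply/nbhs_pinftyP; exists M => x /g2_neq0 g2x; rewrite /= mulrA divfK.
rewrite mulr0 => cv0; move/eqP: c1_neq0; apply.
exact: cvg_unique cv1 cv0.
Qed.

End Pinfty.

Section Laurent.
Variables (R : realType) (r : nat).
Implicit Types (f : laurent r) (s e z : 'rV[int]_r).

Lemma dot_rvR (a b : 'rV[int]_r) : dot (rvR R a) (rvR R b) = (dot a b)%:~R.
Proof. by rewrite /dot rmorph_sum; apply: eq_bigr => i _; rewrite !mxE rmorphM. Qed.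

Lemma rvRB (a b : 'rV[int]_r) : rvR R (a - b) = rvR R a - rvR R b.
Proof. by apply/rowP => i; rewrite !mxE intrB. Qed.

Lemma rvR_eq0 (a : 'rV[int]_r) : (rvR R a == 0) = (a == 0).
Proof.
apply/eqP/eqP => [a0|->]; apply/rowP => i; last by rewrite !mxE.
by apply/eqP; have /rowP/(_ i) := a0; rewrite !mxE => /eqP; rewrite intr_eq0.
Qed.

Definition diff_normals (S : seq 'rV[int]_r) : seq 'rV[R]_r :=
  [seq h <- [seq rvR R (x - y) | x <- S, y <- S] | h != 0].

Lemma diff_normals_neq0 S h : h \in diff_normals S -> h != 0.
Proof. by rewrite mem_filter => /andP []. Qed.

Lemma dot_inj_diff_normals S s :
  (forall h, h \in diff_normals S -> dot h (rvR R s) != 0) -> {in S &, injective (dot s)}.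
Proof.
move=> s_generic x y xS yS sxy; apply/eqP; rewrite -subr_eq0 -rvR_eq0; apply/negPn/negP => xy.
have /s_generic : rvR R (x - y) \in diff_normals S by rewrite mem_filter xy allpairs_f.
by rewrite dotC dot_rvR dotBr sxy subrr eqxx.
Qed.

Lemma newton_support f e : e \in finsupp f -> newton f (rvR R e).
Proof.
move=> ef; exists (fun y => (y == e)%:R); split; first by move=> y; case: eqP.
rewrite !(bigD1_seq e) ?fset_uniq //= eqxx scale1r !big1_seq ?addr0 //.
  by move=> y /andP [ye _]; rewrite (negbTE ye) scale0r.
by move=> y /andP [ye _]; rewrite (negbTE ye).
Qed.

Lemma newton_cone f (l : seq 'rV[int]_r) (w : 'rV[int]_r -> R) :
  (forall e, 0 <= w e) -> (forall e, e \in l -> newton f (rvR R e)) ->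
  exists v : 'rV[int]_r -> R, [/\ forall y, 0 <= v y,
    \sum_(y <- finsupp f) v y = \sum_(e <- l) w e &
    \sum_(y <- finsupp f) v y *: rvR R y = \sum_(e <- l) w e *: rvR R e].
Proof.
move=> w0; elim: l => [|e l IH] l_newton.
  exists (fun _ => 0); split=> //; rewrite !big_nil big1 // => y _.
  by rewrite scale0r.
have /IH [v [v0 v_sum v_comb]] : forall y, y \in l -> newton f (rvR R y).
  by move=> y yl; apply: l_newton; rewrite inE yl orbT.
have [u [u0 [u_sum u_comb]]] := l_newton e (mem_head _ _).
exists (fun y => w e * u y + v y); split.
- by move=> y; rewrite addr_ge0 ?mulr_ge0.
- by rewrite big_split /= -mulr_sumr u_sum mulr1 big_cons v_sum.
- under eq_bigr do rewrite scalerDl -scalerA.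
  by rewrite big_split /= -scaler_sumr -u_comb big_cons v_comb.
Qed.

Lemma Nsmall_support f1 f2 :
  (forall e, e \in finsupp f1 -> newton f2 (rvR R e)) -> Nsmall R f1 f2.
Proof.
move=> supp_newton x [w [w0 [w_sum ->]]].
have [v [v0 v_sum v_comb]] := newton_cone w0 supp_newton.
by exists v; rewrite v_sum v_comb.
Qed.

Lemma newton_dot_le f (a : 'rV[R]_r) (N : R) x :
  (forall y, y \in finsupp f -> dot a (rvR R y) <= N) -> newton f x -> dot a x <= N.
Proof.
move=> le_N [w [w0 [w_sum ->]]]; rewrite dot_sumr.
under eq_bigr do rewrite dotZr.
rewrite -[N]mul1r -w_sum mulr_suml big_seq [leRHS]big_seq.
by apply: ler_sum => y /le_N; apply: ler_wpM2l.
Qed.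

Lemma leval_xipow_scaled f s (N : int) (xi : R) : 0 < xi ->
  leval f (xipow s xi) / xi ^ N =
  \sum_(e <- finsupp f) (f e)%:~R * xi ^ (dot s e - N).
Proof.
move=> xi_gt0; have xi_neq0 : xi != 0 by rewrite gt_eqF.
rewrite mulr_suml; apply: eq_bigr => e _; rewrite -mulrA; congr (_ * _).
rewrite expfzDr // invr_expz; congr (_ * _).
rewrite /dot (big_morph _ (fun m n => expfzDr m n xi_neq0) (expr0z xi)).
by apply: eq_bigr => i _; rewrite mxE exprz_exp.
Qed.

Lemma cvg_leval_xipow f s (N : int) :
  (forall e, e \in finsupp f -> dot s e <= N) ->
  leval f (xipow s xi) / xi ^ N @[xi --> +oo] -->
  \sum_(e <- finsupp f | dot s e == N) ((f e)%:~R : R).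
Proof.
move=> le_N.
have -> : \sum_(e <- finsupp f | dot s e == N) ((f e)%:~R : R) =
    \sum_(e <- finsupp f | e \in finsupp f) (f e)%:~R * ((dot s e - N == 0)%:R).
  rewrite -big_seq big_mkcond; apply: eq_bigr => e _.
  by rewrite subr_eq0; case: eqP; rewrite ?mulr1 ?mulr0.
apply: (cvg_trans (near_eq_cvg (f := fun xi =>
  \sum_(e <- finsupp f | e \in finsupp f) (f e)%:~R * xi ^ (dot s e - N)) _)).
  by apply/nbhs_pinftyP; exists 0 => xi /leval_xipow_scaled ->; rewrite -big_seq.
apply: cvg_big => [|e /le_N e_le]; first exact: add_continuous.
by apply: cvgM; [apply: cvg_cst|apply: cvg_exprz_nonpos; rewrite subr_le0].
Qed.

Lemma lim_finiteP f1 f2 s : lim_finite R f1 f2 s <->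
  (exists M : R, forall xi, M < xi -> leval f2 (xipow s xi) != 0) /\
  exists L : R, leval f1 (xipow s xi) / leval f2 (xipow s xi) @[xi --> +oo] --> L.
Proof. by split=> -[den_neq0 [L /cvg_pinftyP cvL]]; split=> //; exists L. Qed.

(* [dot h (rvR R (curve_point z t))] as a polynomial in [t]: its coefficients of
   degree [< r] are those of [h], hence it is nonzero when [h] is. *)
Definition curve_poly z (h : 'rV[R]_r) : {poly R} :=
  dot h (rvR R z) *: 'X^r + \sum_(i < r) h 0 i *: 'X^i.

Lemma horner_curve_poly z h (t : nat) :
  (curve_poly z h).[t%:R] = dot h (rvR R (curve_point z t)).
Proof.
rewrite /curve_poly hornerD hornerZ hornerXn horner_sum /dot mulr_suml -big_split /=.
apply: eq_bigr => i _; rewrite hornerZ hornerXn !mxE.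
by rewrite intrD intrM !rmorphXn /=; ring.
Qed.

Lemma curve_poly_neq0 z h : h != 0 -> curve_poly z h != 0.
Proof.
move=> h_neq0; have [i hi_neq0] : exists i, h 0 i != 0.
  by apply/existsP; apply: contraNT h_neq0; rewrite negb_exists => /forallP h0;
    apply/eqP/rowP => i; apply/eqP; rewrite mxE; exact/negPn/h0.
apply: contra hi_neq0 => /eqP /(congr1 (coefp i)) /=.
rewrite coef0 coefD coefZ coefXn ltn_eqF // mulr0 add0r coef_sum => <-.
rewrite (bigD1 i) //= coefZ coefXn eqxx mulr1 big1 ?addr0 // => j ji.
have /negbTE ij : (i : nat) != j by rewrite eq_sym; exact: ji.
by rewrite coefZ coefXn ij mulr0.
Qed.

Lemma exists_generic_direction z (D : seq 'rV[int]_r) (H : seq 'rV[R]_r) :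
  (forall d, d \in D -> 0 < dot z d) -> (forall h, h \in H -> h != 0) ->
  exists s, (forall d, d \in D -> 0 < dot s d) /\
            (forall h, h \in H -> dot h (rvR R s) != 0).
Proof.
move=> zD_gt0 H_neq0; set B := \sum_(d <- D) \sum_(i < r) `|d 0 i|.
have prod_neq0 : \prod_(h <- H) curve_poly z h != 0.
  by rewrite prodf_seq_neq0; apply/allP => h hH; exact/curve_poly_neq0/H_neq0.
have [t B_le_t t_nonroot] := exists_nonroot `|B|%N.+1 prod_neq0.
exists (curve_point z t); split=> [d dD|h hH].
  apply: dot_curve_point_gt0; first exact: zD_gt0.
  apply: (le_lt_trans (_ : _ <= B)).
    rewrite (ler_sum_term (G := fun d : 'rV[int]_r => \sum_(i < r) `|d 0 i|) dD) //.
    by move=> e; rewrite sumr_ge0.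
  by apply: (le_lt_trans (ler_norm B)); rewrite -abszE ltz_nat.
move: t_nonroot; rewrite /root horner_prod prodf_seq_neq0 => /allP /(_ h hH).
by rewrite horner_curve_poly.
Qed.

Lemma exists_int_direction (a : 'rV[R]_r) (D : seq 'rV[int]_r) :
  (forall d, d \in D -> 1 <= dot a (rvR R d)) ->
  exists z, forall d, d \in D -> 0 < dot z d.
Proof.
move=> aD_ge1; pose A (d : 'rV[int]_r) : R := \sum_i `|(rvR R d) 0 i|.
pose m : R := 1 + \sum_(d <- D) A d.
pose z : 'rV[int]_r := \row_i Num.floor (m * a 0 i).
exists z => d dD; rewrite -(ltr_int R) -dot_rvR.
have A_le : A d <= m - 1.
  by rewrite /m addrC addKr (ler_sum_term dD) // => e; rewrite sumr_ge0.
have A_ge0 : 0 <= A d by rewrite sumr_ge0.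
have ad_ge1 := aD_ge1 d dD.
have round_err : `|dot (rvR R z - m *: a) (rvR R d)| <= A d.
  apply: (le_trans (ler_norm_sum _ _ _)); apply: ler_sum => i _.
  rewrite !mxE normrM ler_piMl // distrC.
  have /andP [fl_le le_fl] := floor_itv (m * a 0 i).
  by rewrite ler_norml; apply/andP; split; lra.
move: round_err; rewrite dotBl dotZl ler_norml => /andP [err_ge _].
have : m <= m * dot a (rvR R d) by rewrite ler_peMr // ?ltW //; lra.
lra.
Qed.

Lemma exists_separating_direction (S : seq 'rV[int]_r) e (a : 'rV[R]_r)
    (H : seq 'rV[R]_r) :
  (forall y, y \in S -> dot a (rvR R y) + 1 <= dot a (rvR R e)) ->
  (forall h, h \in H -> h != 0) ->
  exists s, (forall y, y \in S -> dot s y < dot s e) /\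
            (forall h, h \in H -> dot h (rvR R s) != 0).
Proof.
move=> a_sep H_neq0.
have [z zD_gt0] : exists z, forall d, d \in [seq e - y | y <- S] -> 0 < dot z d.
  apply: (exists_int_direction (a := a)) => _ /mapP [y yS ->].
  by rewrite rvRB dotBr; have := a_sep y yS; lra.
have [s [sD_gt0 s_generic]] := exists_generic_direction zD_gt0 H_neq0.
exists s; split=> // y yS.
by rewrite -subr_gt0 -dotBr; apply: sD_gt0; exact: map_f.
Qed.

Lemma cvg_leval_vertex f s e :
  e \in finsupp f -> {in finsupp f &, injective (dot s)} ->
  (forall y, y \in finsupp f -> dot s y <= dot s e) ->
  leval f (xipow s xi) / xi ^ dot s e @[xi --> +oo] --> ((f e)%:~R : R).
Proof.
move=> ef s_inj e_max.
rewrite -(big_pred1_inj_seq (fun y => (f y)%:~R : R) (fset_uniq _) ef s_inj).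
exact: cvg_leval_xipow.
Qed.

Lemma lim_finite_of_vertex f1 f2 s e2 :
  e2 \in finsupp f2 -> {in finsupp f2 &, injective (dot s)} ->
  (forall y, y \in finsupp f2 -> dot s y <= dot s e2) ->
  (forall e, e \in finsupp f1 -> dot s e <= dot s e2) ->
  lim_finite R f1 f2 s.
Proof.
move=> e2f2 s_inj e2_max f1_le.
have c2_neq0 : (f2 e2)%:~R != 0 :> R by rewrite intr_eq0 -mem_finsupp.
have [den_neq0 cv] :=
  cvg_ratio c2_neq0 (cvg_leval_xipow f1_le) (cvg_leval_vertex e2f2 s_inj e2_max).
by apply/lim_finiteP; split=> //; eexists; exact: cv.
Qed.

Lemma not_lim_finite_of_vertex f1 f2 s e1 :
  e1 \in finsupp f1 -> {in finsupp f1 &, injective (dot s)} ->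
  (forall e, e \in finsupp f1 -> dot s e <= dot s e1) ->
  (forall y, y \in finsupp f2 -> dot s y < dot s e1) ->
  ~ lim_finite R f1 f2 s.
Proof.
move=> e1f1 s_inj e1_max f2_lt /lim_finiteP [den_neq0 [L cvL]].
have c1_neq0 : (f1 e1)%:~R != 0 :> R by rewrite intr_eq0 -mem_finsupp.
have c2_eq0 : \sum_(y <- finsupp f2 | dot s y == dot s e1) ((f2 y)%:~R : R) = 0.
  rewrite big_seq_cond big1 // => y /andP [/f2_lt lt_e1 /eqP eq_e1].
  by rewrite eq_e1 ltxx in lt_e1.
have := cvg_leval_xipow (fun y yf2 => ltW (f2_lt y yf2)); rewrite c2_eq0 => cv2.
exact: cvg_ratio_div0 c1_neq0 (cvg_leval_vertex e1f1 s_inj e1_max) cv2 den_neq0 cvL.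
Qed.

Lemma lim_finite_of_Nsmall f1 f2 : finsupp f2 != fset0 ->
  exists K : 'rV[int]_r -> Prop, in_finite_hyperplanes R K /\
    (Nsmall R f1 f2 -> forall s, ~ K s -> lim_finite R f1 f2 s).
Proof.
move=> /fset0Pn [y0 y0f2].
pose K s := exists2 h, h \in diff_normals (finsupp f2) & dot h (rvR R s) = 0.
exists K; split.
  exists (diff_normals (finsupp f2)).
  by split=> [h /diff_normals_neq0|s [h hA hs]] //; exists h.
move=> f1_small s s_notK.
have s_inj : {in finsupp f2 &, injective (dot s)}.
  by apply: dot_inj_diff_normals => h hA; apply/eqP => hs; apply: s_notK; exists h.
have [e2 e2f2 e2_max] := fset_argmax (dot s) y0f2.
apply: (lim_finite_of_vertex e2f2 s_inj e2_max) => e ef1.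
rewrite -(ler_int R) -!dot_rvR.
apply: newton_dot_le (f1_small _ (newton_support ef1)) => y yf2.
by rewrite !dot_rvR ler_int e2_max.
Qed.

Lemma Nsmall_of_lim_finite f1 f2 (K : 'rV[int]_r -> Prop) :
  in_finite_hyperplanes R K -> (forall s, ~ K s -> lim_finite R f1 f2 s) ->
  Nsmall R f1 f2.
Proof.
move=> [A [A_neq0 K_in_A]] lim_fin; apply: Nsmall_support => e ef1.
have [[w [w0 w_sum w_comb]]|[a a_sep]] :=
  separation (@rvR R r) (rvR R e) (fset_uniq (finsupp f2)).
  by exists w; split=> //; split.
have [|s [s_sep s_generic]] :=
  exists_separating_direction (H := A ++ diff_normals (finsupp f1)) a_sep.
  by move=> h; rewrite mem_cat => /orP [/A_neq0|/diff_normals_neq0].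
have s_notK : ~ K s.
  by move=> /K_in_A [h hA /eqP]; apply/negP; apply: s_generic; rewrite mem_cat hA.
have s_inj : {in finsupp f1 &, injective (dot s)}.
  by apply: dot_inj_diff_normals => h hD; apply: s_generic; rewrite mem_cat hD orbT.
have [e1 e1f1 e1_max] := fset_argmax (dot s) ef1.
case: (not_lim_finite_of_vertex e1f1 s_inj e1_max _ (lim_fin s s_notK)) => y yf2.
exact: lt_le_trans (s_sep y yf2) (e1_max e ef1).
Qed.

End Laurent.

Local Open Scope fset_scope.

Theorem proposition3p6 (R : realType) (r : nat) (f1 f2 : laurent r) :
  finsupp f2 != fset0 ->
  (exists K : 'rV[int]_r -> Prop,
      in_finite_hyperplanes R K /\
      (Nsmall R f1 f2 -> forall s, ~ K s -> lim_finite R f1 f2 s)) /\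
  (forall K : 'rV[int]_r -> Prop,
      in_finite_hyperplanes R K ->
      (forall s, ~ K s -> lim_finite R f1 f2 s) ->
      Nsmall R f1 f2).
Proof.
move=> f2_neq0; split; first exact: lim_finite_of_Nsmall.
by move=> K; exact: Nsmall_of_lim_finite.
Qed.
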